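(* There is a function $f:\mathbb{N}\to\mathbb{N}$ with the following property. Let $m$ be a positive integer and let $G=QH$ be a finite group, where $Q$ is a normal nilpotent subgroup, $H$ is a subgroup, $\gcd(|Q|,|H|)=1$, and $|Q:C_Q(x)|\le m$ for all $x\in H$. Then $|[Q,H]|\le f(m)$.
   Context: $[Q,H]$ denotes the subgroup generated by all commutators $[q,h]$ with $q\in Q$, $h\in H$. *)

From mathcomp Require Import all_boot all_fingroup all_solvable.

From mathcomp Require Import all_boot all_fingroup all_solvable.
From mathcomp Require Import ssralg zify.

Set Implicit Arguments.
Unset Strict Implicit.
Unset Printing Implicit Defensive.
Local Open Scope group_scope.

(* We bound Y = [Q, H] in terms of m alone.
   1. Coprime action: [Y, H] = Y (coprime_commGid) and, as Y is solvable,
      C_Y(H) <= Y' (coprime_cent_sub_der1).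
   2. Index of the fixed points: |Y : C_Y(H)| <= m ^ (4 m^2)
      (index_cent_bound).  By induction on |Y|, split off a minimal normal
      subgroup F of Y <*> H inside Y; F is central in Y and elementary
      abelian, indices multiply along F, and on F either H acts trivially or
      C_F(H) = 1 and a double-counting argument gives |F| <= 2 ^ (2 m^2)
      (minnormal_index_bound).
   3. A Schur-type bound (card_comm_eq_coprime): the core C0 of C_Y(H) in Y
      has index n <= M ^ M where M = |Y : C_Y(H)| (index_gcore); it is
      central in Y (three-subgroup lemma) and lies in Y', so by transfer its
      elements have order dividing n, and it is generated by the at most n^2
      values of a factor set of Y / C0; hence |C0| <= n ^ (n^2). *)

Lemma indexg_leS (gT : finGroupType) (A B K : {group gT}) :
  A \subset B -> #|A : K| <= #|B : K|.
Proof.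
move=> sAB; set L := [group of B :&: K].
have eAL : A :&: L = A :&: K by rewrite /= setIA (setIidPl sAB).
have sALB : A * L \subset B by rewrite mul_subG ?subsetIl.
have eAK := Lagrange (subsetIl A K); have eBK := Lagrange (subsetIl B K).
have := mul_cardG A L; rewrite eAL => eAL_card.
rewrite -(indexgI A K) -(indexgI B K).
rewrite -(leq_pmul2r (cardG_gt0 [group of A :&: K])) -(leq_pmul2r (cardG_gt0 L)).
rewrite [(_ * #|A :&: K|)%N]mulnC eAK mulnAC [(#|B : _| * _)%N]mulnC eBK eAL_card.
by rewrite leq_mul2r subset_leq_card ?orbT.
Qed.

(* An abelian group generated by a set A of elements of order at most e has
   order at most e ^ |A|, since it is the product of the cyclic groups <[a]>. *)
Lemma card_abelian_gen (gT : finGroupType) (A : {set gT}) (e : nat) :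
  abelian <<A>> -> {in A, forall a, #[a] <= e} -> #|<<A>>| <= e ^ #|A|.
Proof.
move cardA: #|A| => n; elim: n A cardA => [|n IHn] A cardA abA oA.
  by move/eqP: cardA; rewrite cards_eq0 => /eqP->; rewrite gen0 cards1.
have [a Aa] : exists a, a \in A by apply/set0Pn; rewrite -cards_eq0 cardA.
set B := A :\ a.
have sBA : B \subset A := subsetDl A [set a].
have cardB : #|B| = n by move: cardA; rewrite (cardsD1 a) Aa add1n => -[].
have abB : abelian <<B>> := abelianS (genS sBA) abA.
have oB : {in B, forall b, #[b] <= e} by move=> b /(subsetP sBA)/oA.
have caB : <[a]> \subset 'C(<<B>>).
  rewrite cycle_subG (subsetP (centS (genS sBA))) //.
  by rewrite (subsetP abA) ?mem_gen.
have sAaB : <<A>> \subset <[a]> * <<B>>.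
  rewrite -cent_joinEl // gen_subG -(setD1K Aa) subUset sub1set.
  rewrite (subsetP (joing_subl _ _)) ?cycle_id //=.
  exact: subset_trans (subset_gen B) (joing_subr _ _).
apply: leq_trans (subset_leq_card sAaB) _.
apply: (@leq_trans (#[a] * #|<<B>>|)).
  by rewrite orderE mul_cardG leq_pmulr ?cardG_gt0.
by rewrite expnS leq_mul ?oA ?IHn.
Qed.

Lemma indexgI_mul (gT : finGroupType) (Y A B : {group gT}) :
  #|Y : A :&: B| <= #|Y : A| * #|Y : B|.
Proof.
rewrite -(indexgI Y (A :&: B)) -(indexgI Y B) setIA setIAC.
rewrite -(Lagrange_index (subsetIl Y B) (subsetIl (Y :&: B) A)) mulnC.
by rewrite leq_mul2r; apply/orP; right; rewrite indexgI indexg_leS ?subsetIl.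
Qed.

Lemma index_bigcap_conjg (gT : finGroupType) (Y C : {group gT}) (R : {set gT}) :
  R \subset Y -> #|Y : \bigcap_(r in R) C :^ r| <= #|Y : C| ^ #|R|.
Proof.
move cardR: #|R| => n; elim: n R cardR => [|n IHn] R cardR sRY.
  move/eqP: cardR; rewrite cards_eq0 => /eqP->.
  by rewrite big_set0 -(indexgI Y [group of setT]) setIT indexgg.
have [r Rr] : exists r, r \in R by apply/set0Pn; rewrite -cards_eq0 cardR.
have cardRr : #|R :\ r| = n by move: cardR; rewrite (cardsD1 r) Rr add1n => -[].
have sRrY : R :\ r \subset Y := subset_trans (subsetDl R [set r]) sRY.
rewrite (big_setD1 r Rr) /=.
apply: leq_trans (indexgI_mul Y (C :^ r)%G [group of \bigcap_(s in R :\ r) C :^ s]) _.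
rewrite expnS leq_mul ?(IHn _ cardRr sRrY) //=.
by rewrite -(indexJg Y C r) (conjGid (subsetP sRY r Rr)).
Qed.

(* The core of C in Y, the largest normal subgroup of Y inside C, has index at
   most n ^ n where n = |Y : C|: it is the intersection of the at most n
   distinct conjugates of C by elements of Y. *)
Lemma index_gcore (gT : finGroupType) (Y C : {group gT}) :
  #|Y : gcore C Y| <= #|Y : C| ^ #|Y : C|.
Proof.
set N := 'N_Y(C); pose R := [set repr B | B in rcosets N Y].
have reprN y : y \in Y -> repr (N :* y) \in N :* y /\ repr (N :* y) \in Y.
  move=> Yy; have Ny := mem_repr_rcoset N y; split=> //.
  move: Ny; rewrite mem_rcoset => /setIP[Yry _].
  by rewrite -(mulgKV y (repr _)) groupM.
have sRY : R \subset Y.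
  by apply/subsetP=> _ /imsetP[_ /rcosetsP[y Yy ->] ->]; case: (reprN y Yy).
have cardR : #|R| <= #|Y : C|.
  apply: leq_trans (leq_imset_card _ _) _.
  rewrite -(indexgI Y C) dvdn_leq ?indexg_gt0 // indexgS //.
  by rewrite setIS // normG.
have sRcore : \bigcap_(r in R) C :^ r \subset gcore C Y.
  apply/bigcapsP=> y Yy; have [Ny _] := reprN y Yy.
  have -> : C :^ y = C :^ repr (N :* y).
    move: Ny; rewrite mem_rcoset => /setIP[_ nCx].
    by rewrite -(mulgKV y (repr (N :* y))) conjsgM (normP nCx).
  by apply: bigcap_inf; apply: imset_f; apply/rcosetsP; exists y.
apply: leq_trans (dvdn_leq (indexg_gt0 _ _) (indexgS Y sRcore)) _.
apply: leq_trans (index_bigcap_conjg C sRY) _.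
by rewrite leq_pexp2l ?indexg_gt0.
Qed.

(* For a coprime action of H on a solvable group Q, [Q, H, H] = [Q, H]:
   Q = [Q, H] C_Q(H), and C_Q(H) contributes nothing to [Q, H]. *)
Lemma coprime_commGid (gT : finGroupType) (Q H : {group gT}) :
  solvable Q -> H \subset 'N(Q) -> coprime #|Q| #|H| -> [~: Q, H, H] = [~: Q, H].
Proof.
move=> solQ nQH coQH; set Y := [~: Q, H]; set C := 'C_Q(H).
have sYQ : Y \subset Q by rewrite commg_subl.
have nYQ : Q \subset 'N(Y) := commg_norml Q H.
have nYH : H \subset 'N(Y) := commg_normr H Q.
have coYH : coprime #|Y| #|H| := coprimeSg sYQ coQH.
have cQYH : Q / Y \subset 'C(H / Y) by rewrite quotient_cents2.
have eQY : Q / Y = C / Y.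
  have := coprime_norm_quotient_cent nQH nYH coYH (solvableS sYQ solQ).
  by rewrite (setIidPl cQYH).
have sQYC : Q \subset Y * C by rewrite -quotientSK // eQY.
have eQ : Q :=: Y * C.
  by apply/eqP; rewrite eqEsubset sQYC mul_subG ?subsetIl.
have nRC : C \subset 'N([~: Y, H]).
  by rewrite normsR ?(subset_trans (subsetIl Q _) nYQ) ?cents_norm ?subsetIr.
have cCH : [~: C, H] = 1 by apply/commG1P; rewrite subsetIr.
by rewrite {2}/Y eQ commMG // cCH mulg1.
Qed.

(* If H acts coprimely on a solvable Y with [Y, H] = Y, then the fixed points
   lie in the derived subgroup: on the abelian quotient Y / Y' the action has
   trivial fixed points because [Y/Y', H] = Y/Y'. *)
Lemma coprime_cent_sub_der1 (gT : finGroupType) (Y H : {group gT}) :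
  solvable Y -> H \subset 'N(Y) -> coprime #|Y| #|H| -> [~: Y, H] = Y ->
  'C_Y(H) \subset Y^`(1).
Proof.
move=> solY nYH coYH eY; set D := Y^`(1).
have sDY : D \subset Y := der_sub 1 Y.
have nDH : H \subset 'N(D) := char_norm_trans (der_char 1 Y) nYH.
have nDY : Y \subset 'N(D) := der_norm 1 Y.
have abYD : abelian (Y / D) := sub_der1_abelian (subxx _).
have nYDH : H / D \subset 'N(Y / D) := morphim_norms _ nYH.
have coYDH : coprime #|Y / D| #|H / D| := coprime_morph _ coYH.
have := coprime_abel_cent_TI nYDH coYDH abYD.
rewrite -quotientR ?eY // -coprime_norm_quotient_cent ?(solvableS sDY) //;
  last exact: coprimeSg sDY coYH.
move/eqP; rewrite -subG1 quotient_sub1 //.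
exact: subset_trans (subsetIl _ _) nDY.
Qed.

(* Three-subgroup lemma: when [Y, H] = Y, a normal subgroup of Y centralized
   by H is central in Y. *)
Lemma comm_perfect_normal_cent (gT : finGroupType) (Y H N : {group gT}) :
  [~: Y, H] = Y -> N <| Y -> N \subset 'C(H) -> N \subset 'C(Y).
Proof.
move=> eY /andP[_ nNY] cNH.
have cHNY : [~: H, N, Y] :=: 1.
  have -> : [~: H, N] = 1 by apply/commG1P; rewrite centsC.
  exact: comm1G.
have cNYH : [~: N, Y, H] :=: 1.
  by apply/commG1P; apply: subset_trans cNH; rewrite commg_subl.
by have := three_subgroup cHNY cNYH; rewrite eY => /commG1P; rewrite centsC.
Qed.

(* A subgroup U supplementing a central subgroup Z <= Y' is all of Y: Y / U is
   a quotient of the abelian group Z, so Y' <= U and hence Z <= U. *)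
Lemma central_der1_supplement (gT : finGroupType) (Y Z U : {group gT}) :
  U \subset Y -> Y \subset Z * U -> Y \subset 'C(Z) -> Z \subset Y^`(1) ->
  Y \subset U.
Proof.
move=> sUY sYZU cYZ sZD.
have sZY : Z \subset Y := subset_trans sZD (der_sub 1 Y).
have nUY : Y \subset 'N(U).
  apply: subset_trans sYZU _; rewrite mul_subG ?normG // cents_norm //.
  by rewrite centsC (subset_trans sUY cYZ).
have abYU : abelian (Y / U).
  apply: abelianS (quotient_abelian U (subset_trans sZY cYZ)).
  by rewrite -(quotientMidr U Z) quotientS.
have sDU : Y^`(1) \subset U := der1_min nUY abYU.
by apply: subset_trans sYZU _; rewrite mul_subG // (subset_trans sZD).
Qed.

Section CentralSubgroup.

Variables (gT : finGroupType) (Y Z : {group gT}).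
Hypotheses (sZY : Z \subset Y) (cYZ : Y \subset 'C(Z)).

(* Transfer into the central subgroup Z is z |-> z ^+ |Y : Z| on Z, and it
   kills Y'; hence elements of Z :&: Y' have order dividing |Y : Z|. *)
Lemma central_der1_expn z : z \in Z -> z \in Y^`(1) -> z ^+ #|Y : Z| = 1.
Proof.
move=> Zz Dz.
have abZ : abelian (idm Z @* Z).
  by rewrite morphim_idm //; apply: subset_trans sZY cYZ.
have Yz : z \in Y := subsetP sZY z Zz.
have Zz_idm : z \in idm Z @* Z by rewrite morphim_idm.
pose tr := transfer_morphism Y abZ.
have sDker : Y^`(1) \subset 'ker tr.
  rewrite derg1 gen_subG; apply/subsetP=> _ /imset2P[a b Ya Yb ->].
  apply/kerP; first by rewrite groupR.
  by rewrite morphR //; apply/eqP/commgP; apply: GRing.addrC.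
have trz : tr z = 1 by apply: mker; apply: (subsetP sDker).
have trX := transversalP (rcosets_cycle_partition sZY Yz).
have := transfer_cycle_expansion sZY abZ Yz trX.
rewrite (eq_bigr (fun x => FiniteModule.fmod abZ z *+ #|<[z]> : Z :* x|)%R);
  last first.
  move=> x Xx; have Yx : x \in Y := subsetP (transversal_sub trX) x Xx.
  have Zzx : z ^+ #|<[z]> : Z :* x| \in Z by rewrite groupX.
  have -> : z ^+ #|<[z]> : Z :* x| ^ x^-1 = z ^+ #|<[z]> : Z :* x|.
    apply/conjg_fixP/commgP/commute_sym.
    exact: (centP (subsetP cYZ _ (groupVr Yx))).
  rewrite /= /restrm /=.
  by rewrite /idm FiniteModule.fmodX.
rewrite GRing.sumrMnr (sum_index_rcosets_cycle sZY Yz trX) => tr_expn.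
have : FiniteModule.fmod abZ (z ^+ #|Y : Z|) = 0%R.
  by rewrite FiniteModule.fmodX // -tr_expn.
move/(congr1 (@FiniteModule.fmval _ _ abZ)).
by rewrite FiniteModule.fmodK ?groupX.
Qed.

(* A right transversal T of Z in Y, given by the coset representatives, and
   the set A of values t s r(ts)^-1 of the associated factor set. *)
Local Notation r y := (repr (Z :* y)).
Let T := [set repr B | B in rcosets Z Y].
Let A := [set t * s * (r (t * s))^-1 | t in T, s in T].

Lemma transversal_repr_mem y : y \in Y -> r y \in T.
Proof. by move=> Yy; apply: imset_f; apply/rcosetsP; exists y. Qed.

Lemma transversal_sub : T \subset Y.
Proof.
apply/subsetP=> _ /imsetP[_ /rcosetsP[y Yy ->] ->].
have := mem_repr_rcoset Z y; rewrite mem_rcoset => Zx.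
by rewrite -(mulgKV y (r y)) groupM // (subsetP sZY).
Qed.

Lemma factor_set_sub : <<A>> \subset Z.
Proof.
rewrite gen_subG; apply/subsetP=> _ /imset2P[t s _ _ ->].
have := mem_repr_rcoset Z (t * s); rewrite mem_rcoset => Zx.
by rewrite -[X in X \in Z]invgK invMg invgK groupV.
Qed.

Lemma card_factor_set : #|A| <= #|Y : Z| * #|Y : Z|.
Proof.
have cardT : #|T| <= #|Y : Z| by apply: leq_imset_card.
rewrite /A curry_imset2X (leq_trans (leq_imset_card _ _)) // cardsX.
exact: leq_mul.
Qed.

Lemma repr_Z_factor_set : r 1 \in A.
Proof.
have Zr1 : r 1 \in Z by have := mem_repr_rcoset Z 1; rewrite rcoset1.
have -> : r 1 = r 1 * r 1 * (r (r 1 * r 1))^-1.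
  by rewrite (rcoset_id (groupM Zr1 Zr1)) rcoset1 mulgK.
by apply/imset2P; exists (r 1) (r 1); rewrite ?transversal_repr_mem ?group1.
Qed.

(* <<A>> T is closed under multiplication, since T commutes with Z and
   t s = (t s r(ts)^-1) r(ts). *)
Lemma factor_set_mulT_group : group_set (<<A>> * T).
Proof.
apply/group_setP; split.
  rewrite -(mulVg (r 1)) mem_mulg ?groupV ?mem_gen ?repr_Z_factor_set //.
  by rewrite transversal_repr_mem ?group1.
move=> _ _ /mulsgP[w1 t1 Aw1 Tt1 ->] /mulsgP[w2 t2 Aw2 Tt2 ->].
have Yt1 := subsetP transversal_sub t1 Tt1.
have Yt2 := subsetP transversal_sub t2 Tt2.
have ct : t1 * w2 = w2 * t1.
  by apply: (centP (subsetP cYZ _ Yt1)); apply: (subsetP factor_set_sub).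
have -> : w1 * t1 * (w2 * t2) =
    (w1 * w2 * (t1 * t2 * (r (t1 * t2))^-1)) * r (t1 * t2).
  by rewrite !mulgA mulgKV -(mulgA w1 t1) ct !mulgA.
have Ats : t1 * t2 * (r (t1 * t2))^-1 \in <<A>>.
  by apply: mem_gen; apply/imset2P; exists t1 t2.
by rewrite mem_mulg ?(groupM (groupM Aw1 Aw2) Ats) ?transversal_repr_mem ?groupM.
Qed.

Lemma factor_set_gen : Z \subset Y^`(1) -> Z \subset <<A>>.
Proof.
move=> sZD; pose P := Group factor_set_mulT_group.
have sYZT : Y \subset Z * <<T>>.
  apply/subsetP=> y Yy.
  have : y \in Z :* r y by rewrite rcoset_repr rcoset_refl.
  rewrite mem_rcoset => Zy.
  by rewrite -(mulgKV (r y) y) mem_mulg ?mem_gen ?transversal_repr_mem.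
have sTY : <<T>> \subset Y by rewrite gen_subG transversal_sub.
have sYT := central_der1_supplement sTY sYZT cYZ sZD.
have sTP : <<T>> \subset P.
  by rewrite gen_subG; apply/subsetP=> t Tt; rewrite -(mul1g t) mem_mulg.
apply/subsetP=> z Zz.
have := subsetP (subset_trans sYT sTP) z (subsetP sZY z Zz).
case/mulsgP=> w t Aw Tt ez.
have Zt : t \in Z.
  by rewrite -(mulKg w t) -ez groupM ?groupV // (subsetP factor_set_sub).
rewrite ez; have -> : t = r 1.
  case/imsetP: Tt Zt => _ /rcosetsP[y Yy ->] -> Zt.
  by rewrite rcoset1 -(rcoset_repr Z y) (rcoset_id Zt).
by rewrite groupM // mem_gen ?repr_Z_factor_set.
Qed.

(* Schur-type bound: a central subgroup Z <= Y' of index n has order at most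
   n ^ (n * n), being generated by at most n ^ 2 commuting elements of order
   dividing n. *)
Lemma card_central_der1 :
  Z \subset Y^`(1) -> #|Z| <= #|Y : Z| ^ (#|Y : Z| * #|Y : Z|).
Proof.
move=> sZD.
have abA : abelian <<A>> := abelianS factor_set_sub (subset_trans sZY cYZ).
have oA : {in A, forall a, #[a] <= #|Y : Z|}.
  move=> a Aa; have Za := subsetP factor_set_sub a (mem_gen Aa).
  have := central_der1_expn Za (subsetP sZD a Za).
  by move/eqP; rewrite -order_dvdn => /(dvdn_leq (indexg_gt0 _ _)).
apply: leq_trans (subset_leq_card (factor_set_gen sZD)) _.
apply: leq_trans (card_abelian_gen abA oA) _.
by rewrite leq_pexp2l ?indexg_gt0 ?card_factor_set.
Qed.

End CentralSubgroup.

Lemma leq_expnn (a b : nat) : 0 < a -> a <= b -> (a ^ a <= b ^ b)%N.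
Proof.
move=> a_gt0 le_ab; apply: (@leq_trans (b ^ a)); first by rewrite leq_exp2r.
by rewrite leq_pexp2l // (leq_trans a_gt0).
Qed.

(* The bound on |Y| obtained from a bound M on |Y : C_Y(H)|. *)
Definition schur_bound (M : nat) : nat :=
  let n := (M ^ M)%N in (n * n ^ (n * n))%N.

(* If H acts coprimely on a solvable Y with [Y, H] = Y and |Y : C_Y(H)| <= M,
   then |Y| <= schur_bound M: the core C0 of C_Y(H) in Y has index at most
   M ^ M, is central in Y and lies in Y', so Schur's argument bounds |C0|. *)
Lemma card_comm_eq_coprime (gT : finGroupType) (Y H : {group gT}) (M : nat) :
  solvable Y -> H \subset 'N(Y) -> coprime #|Y| #|H| -> [~: Y, H] = Y ->
  #|Y : 'C_Y(H)| <= M -> #|Y| <= schur_bound M.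
Proof.
move=> solY nYH coYH eY le_M; set C := 'C_Y(H); set C0 := [group of gcore C Y].
have sCY : C \subset Y := subsetIl Y _.
have sC0C : C0 \subset C := gcore_sub C Y.
have sC0Y : C0 \subset Y := subset_trans sC0C sCY.
have cC0Y : C0 \subset 'C(Y).
  apply: comm_perfect_normal_cent eY (gcore_normal sCY) _.
  exact: subset_trans sC0C (subsetIr _ _).
have sC0D : C0 \subset Y^`(1).
  exact: subset_trans sC0C (coprime_cent_sub_der1 solY nYH coYH eY).
have cYC0 : Y \subset 'C(C0) by rewrite centsC.
have cardC0 := card_central_der1 sC0Y cYC0 sC0D.
set n := #|Y : C0| in cardC0; set N := (M ^ M)%N.
have n_gt0 : 0 < n := indexg_gt0 Y C0.
have le_nN : n <= N.
  apply: leq_trans (index_gcore Y C) _.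
  by apply: leq_expnn; rewrite ?indexg_gt0.
rewrite -(Lagrange sC0Y) mulnC /schur_bound -/N leq_mul //.
have N_gt0 : 0 < N := leq_trans n_gt0 le_nN.
apply: leq_trans cardC0 (@leq_trans (N ^ (n * n))%N _ _ _ _).
  by rewrite leq_exp2r ?muln_gt0 ?n_gt0.
by rewrite leq_pexp2l // leq_mul.
Qed.

Lemma sum_card_cent1 (gT : finGroupType) (F H : {set gT}) :
  (\sum_(v in F) #|H :&: 'C[v]| = \sum_(x in H) #|F :&: 'C[x]|)%N.
Proof.
have card_setI (B P : {set gT}) : #|B :&: P| = (\sum_(x in B) (x \in P))%N.
  rewrite -sum1_card big_mkcond [RHS]big_mkcond; apply: eq_bigr => x _.
  by rewrite inE; case: (x \in B); case: (x \in P).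
under eq_bigr do rewrite card_setI.
rewrite exchange_big /=; apply: eq_bigr => x _.
by rewrite card_setI; apply: eq_bigr => v _; rewrite cent1C.
Qed.

Section Counting.
Local Open Scope nat_scope.

(* Otherwise |C_H(v)| < |H| / 2m for all
   v <> 1, and counting commuting pairs in F x H in two ways gives
   |F||H| / m <= |H| + (|F| - 1)|H| / 2m, i.e. |F| < 2m. *)
Lemma small_class_exists (gT : finGroupType) (F H : {group gT}) (m : nat) :
  (forall x, x \in H -> #|F : 'C_F[x]| <= m) -> 2 * m <= #|F| ->
  exists2 v, v \in F & (v != 1)%g && (#|v ^: H| <= 2 * m).
Proof.
move=> le_m le_2m_F.
case: (boolP [exists v in F, (v != 1)%g && (#|H| <= 2 * m * #|'C_H[v]|)]).
  case/exists_inP=> v Fv /andP[ntv small_v]; exists v => //.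
  rewrite ntv -index_cent1 -(leq_pmul2r (cardG_gt0 'C_H[v]%G)).
  by rewrite mulnC Lagrange ?subsetIl // mulnC.
rewrite negb_exists_in => /forall_inP large; exfalso.
have H_gt0 : 0 < #|H| := cardG_gt0 H.
have lower : 2 * #|F| * #|H| <= 2 * m * \sum_(x in H) #|F :&: 'C[x]|.
  rewrite big_distrr /= -[2 * #|F| * #|H|]mulnC -sum_nat_const.
  apply: leq_sum => x Hx; rewrite -mulnA leq_mul2l /=.
  rewrite -[in X in X <= _](Lagrange (subsetIl F 'C[x])) mulnC leq_mul2r.
  by rewrite le_m ?orbT.
have upper : 2 * m * \sum_(v in F) #|H :&: 'C[v]| <=
             2 * m * #|H| + (#|F| - 1) * #|H|.
  rewrite big_distrr (bigD1 1%g) //= cent11T setIT leq_add2l.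
  apply: (@leq_trans (\sum_(v in F | v != 1%g) #|H|)).
    apply: leq_sum => v /andP[Fv ntv].
    by have := large v Fv; rewrite ntv /= -ltnNge => /ltnW.
  rewrite sum_nat_const; apply: eq_leq; congr (_ * _).
  rewrite (cardD1 1%g F) group1 add1n subSS subn0.
  by apply: eq_card => v; rewrite !inE andbC.
rewrite -sum_card_cent1 in lower.
have : 2 * #|F| <= 2 * m + (#|F| - 1).
  by rewrite -(leq_pmul2r H_gt0) mulnDl (leq_trans lower upper).
have := cardG_gt0 F; lia.
Qed.

(* Numerical facts used to absorb |F| <= max(2m, m ^ (2m)) into 2 ^ (2m^2). *)
Lemma small_powers_bound (m : nat) :
  0 < m -> 2 * m <= 2 ^ (2 * m ^ 2) /\ m ^ (2 * m) <= 2 ^ (2 * m ^ 2).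
Proof.
move=> m_gt0; have lt_m_2m : m < 2 ^ m := ltn_expl m (isT : 1 < 2).
split.
  apply: (@leq_trans (2 ^ m * 2 ^ m)).
    by rewrite mulnC leq_mul // (leq_trans _ lt_m_2m) // ltnW.
  by rewrite -expnD leq_exp2l //; nia.
have -> : 2 ^ (2 * m ^ 2) = (2 ^ m) ^ (2 * m) by rewrite -expnM; congr (_ ^ _); lia.
by rewrite leq_exp2r ?muln_gt0 // ltnW.
Qed.

End Counting.

(* If H does not centralize F, the product over H of the indices
   |F : C_F(x)| is at least 2 ^ (|H| / 2): each x outside the proper subgroup
   C_H(F) contributes a factor >= 2, and such x make up half of H. *)
Lemma prod_index_cent1_lower (gT : finGroupType) (F H : {group gT}) :
  ~~ (H \subset 'C(F)) ->
  (2 ^ #|H| <= (\prod_(x in H) #|F : 'C_F[x]|) ^ 2)%N.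
Proof.
move=> ncHF; set S := H :\: 'C(F).
have cardHS : (#|'C_H(F)| + #|S|)%N = #|H| by rewrite cardsID.
have half_H : (2 * #|'C_H(F)| <= #|H|)%N.
  have idx_gt1 : 1 < #|H : 'C_H(F)| by rewrite indexg_gt1 subsetI subxx.
  by rewrite -(Lagrange (subsetIl H 'C(F))) mulnC leq_mul2l idx_gt1 orbT.
have prod_S : (2 ^ #|S| <= \prod_(x in H) #|F : 'C_F[x]|)%N.
  rewrite (bigID (fun x => x \in 'C(F))) /=.
  apply: leq_trans (leq_pmull _ _); last first.
    by rewrite prodn_gt0 // => x; apply: indexg_gt0.
  rewrite -prod_nat_const (eq_bigl (fun x => (x \in H) && (x \notin 'C(F)))).
    apply: leq_prod => x /andP[Hx ncFx].
    by rewrite indexg_gt1 subsetI subxx sub_cent1.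
  by move=> x; rewrite !inE andbC.
apply: (@leq_trans ((2 ^ #|S|) ^ 2)); last by rewrite leq_exp2r.
by rewrite -expnM leq_exp2l //; lia.
Qed.

Section MinimalNormalFactor.

Variables (gT : finGroupType) (Y H F : {group gT}) (m : nat).
Hypotheses (cYF : Y \subset 'C(F)) (minF : minnormal F (Y <*> H)).
Hypotheses (abF : is_abelem F) (le_m : forall x, x \in H -> #|F : 'C_F[x]| <= m).

Lemma minnormal_norm : H \subset 'N(F).
Proof.
have [/andP[_ nFYH] _] := mingroupP minF.
by rewrite (subset_trans _ nFYH) ?joing_subr.
Qed.

(* Since Y centralizes F, every nontrivial H-invariant subgroup of F is F. *)
Lemma minnormal_H_invariant (W : {group gT}) :
  W :!=: 1 -> W \subset F -> H \subset 'N(W) -> W :=: F.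
Proof.
move=> ntW sWF nWH; have [_ minF'] := mingroupP minF; apply: (minF' W _ sWF).
rewrite ntW join_subG nWH andbT cents_norm //.
exact: subset_trans cYF (centS sWF).
Qed.

Lemma minnormal_cent_TI : ~~ (H \subset 'C(F)) -> 'C_F(H) = 1.
Proof.
move=> ncHF; apply/eqP/idPn => ntC.
have nCH : H \subset 'N('C_F(H)) by rewrite normsI ?norms_cent ?minnormal_norm.
have eCF := minnormal_H_invariant ntC (subsetIl F _) nCH.
by move: ncHF; rewrite centsC -eCF subsetIr.
Qed.

Lemma minnormal_class_gen v : v \in F -> v != 1 -> <<v ^: H>> = F.
Proof.
move=> Fv ntv; apply: minnormal_H_invariant.
- by apply/trivgPn; exists v; rewrite ?mem_gen ?class_refl.
- by rewrite gen_subG class_sub_norm ?minnormal_norm.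
- by rewrite norms_gen ?class_norm.
Qed.

(* If H acts nontrivially, |F| <= 2 ^ (2 m^2): F has prime exponent p <= m,
   and either |F| < 2m or F is generated by an H-class of size <= 2m. *)
Lemma minnormal_card_bound : ~~ (H \subset 'C(F)) -> #|F| <= 2 ^ (2 * m ^ 2).
Proof.
move=> ncHF; set p := pdiv #|F|; have pabF : p.-abelem F := abF.
have [x0 Hx0 ncFx0] := subsetPn ncHF.
have idx_gt1 : 1 < #|F : 'C_F[x0]| by rewrite indexg_gt1 subsetI subxx sub_cent1.
have p_le_m : p <= m.
  have pnat_idx : p.-nat #|F : 'C_F[x0]|.
    exact: pnat_dvd (dvdn_indexg _ _) (abelem_pgroup pabF).
  have pi_idx : pdiv #|F : 'C_F[x0]| \in \pi(#|F : 'C_F[x0]|) by rewrite pi_pdiv.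
  have := pnatPpi pnat_idx pi_idx; rewrite inE => /eqP <-.
  by apply: leq_trans (le_m Hx0); apply: pdiv_leq; lia.
have m_gt0 : 0 < m by apply: leq_trans (le_m Hx0); apply: indexg_gt0.
have [le_2m le_m2m] := small_powers_bound m_gt0.
have [lt_F_2m | ] := ltnP #|F| (2 * m); first exact: leq_trans (ltnW lt_F_2m) le_2m.
case/(small_class_exists le_m) => v Fv /andP[ntv small_v].
have eF := minnormal_class_gen Fv ntv.
have sClF : v ^: H \subset F by rewrite class_sub_norm ?minnormal_norm.
have oF : {in v ^: H, forall a, #[a] <= m}.
  move=> a /(subsetP sClF) Fa.
  have [-> | nta] := eqVneq a 1; first by rewrite order1.
  by rewrite (abelem_order_p pabF Fa nta).
have := card_abelian_gen (abelianS _ (abelem_abelian pabF)) oF.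
rewrite eF => /(_ (subxx _)) le_F; apply: leq_trans le_F (leq_trans _ le_m2m).
by rewrite leq_pexp2l.
Qed.

Lemma minnormal_index_bound :
  #|F : 'C_F(H)| ^ #|H| <= (\prod_(x in H) #|F : 'C_F[x]|) ^ (4 * m ^ 2).
Proof.
have prod_gt0 : 0 < \prod_(x in H) #|F : 'C_F[x]|.
  by rewrite prodn_gt0 // => x; apply: indexg_gt0.
have [cHF | ncHF] := boolP (H \subset 'C(F)).
  have -> : 'C_F(H) = F by apply/setIidPl; rewrite centsC.
  by rewrite indexgg exp1n expn_gt0 prod_gt0.
rewrite minnormal_cent_TI // indexg1.
have [x0 Hx0 _] := subsetPn ncHF.
have e_gt0 : 0 < 2 * m ^ 2.
  by rewrite muln_gt0 expn_gt0 (leq_trans _ (le_m Hx0)) ?indexg_gt0.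
apply: (@leq_trans ((2 ^ (2 * m ^ 2)) ^ #|H|)).
  by rewrite leq_exp2r ?cardG_gt0 ?minnormal_card_bound.
have -> : (4 * m ^ 2 = 2 * (2 * m ^ 2))%N by rewrite mulnA.
rewrite -expnM (mulnC _ #|H|) (expnM 2 #|H|) [X in _ <= X]expnM.
by rewrite leq_exp2r // prod_index_cent1_lower.
Qed.

End MinimalNormalFactor.

Lemma index_cent_quotient (gT : finGroupType) (Y F A : {group gT}) :
  F \subset Y -> Y \subset 'N(F) -> A \subset 'N(Y) -> A \subset 'N(F) ->
  coprime #|F| #|A| -> solvable F ->
  #|Y : 'C_Y(A)| = (#|F : 'C_F(A)| * #|Y / F : 'C_(Y / F)(A / F)|)%N.
Proof.
move=> sFY nFY nYA nFA coFA solF.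
rewrite -(coprime_norm_quotient_cent nYA nFA coFA solF).
set C := 'C_Y(A); have sCY : C \subset Y := subsetIl Y _.
have nFC : C \subset 'N(F) := subset_trans sCY nFY.
have eCF : C :&: F = 'C_F(A) by rewrite /C setIAC (setIidPr sFY).
have eC := LagrangeI [group of C] F; rewrite /= eCF -card_quotient // in eC.
have eYF := Lagrange (quotientS F sCY); rewrite !card_quotient // in eYF.
apply/eqP; rewrite -(eqn_pmul2l (cardG_gt0 [group of C])) (Lagrange sCY).
rewrite -(Lagrange sFY) -(Lagrange (subsetIl F 'C(A))) -eYF -eC.
rewrite card_quotient //; apply/eqP; rewrite !mulnA; congr (_ * _)%N; exact: mulnAC.
Qed.

(* A nontrivial nilpotent group Y normalized by H contains a minimal normal
   subgroup F of Y <*> H; F meets Z(Y) nontrivially, hence is central in Y,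
   and it is elementary abelian since Y is solvable. *)
Lemma minnormal_central_exists (gT : finGroupType) (Y H : {group gT}) :
  nilpotent Y -> Y :!=: 1 -> H \subset 'N(Y) ->
  exists F : {group gT},
    [/\ minnormal F (Y <*> H), F \subset Y, Y \subset 'C(F) & is_abelem F].
Proof.
move=> nilY ntY nYH; set X := Y <*> H.
have nYX : X \subset 'N(Y) by rewrite join_subG normG nYH.
have [F minF sFY] := mingroup_exists (G := Y)
  (gP := fun G : {group gT} => (G :!=: 1) && (X \subset 'N(G)))
  (introT andP (conj ntY nYX)).
have [nFX ntF abF] := minnormal_solvable minF sFY (nilpotent_sol nilY).
have nsFY : F <| Y by rewrite /normal sFY (subset_trans (joing_subl Y H) nFX).
exists F; split=> //; rewrite centsC.
have [_ minF'] := mingroupP minF.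
have nFZX : X \subset 'N(F :&: 'Z(Y)).
  by rewrite normsI // (char_norm_trans (center_char Y)).
have := minF' [group of F :&: 'Z(Y)]; rewrite /= meet_center_nil // nFZX.
by move=> /(_ isT (subsetIl _ _)) <-; rewrite setIC subIset // subsetIr.
Qed.

(* By induction on |Y|: split off a central minimal normal subgroup F of
   Y <*> H, using that both sides are multiplicative along F. *)
Lemma index_cent_prod_bound (m : nat) (gT : finGroupType) (Y H : {group gT}) :
  nilpotent Y -> H \subset 'N(Y) -> coprime #|Y| #|H| ->
  (forall x, x \in H -> #|Y : 'C_Y[x]| <= m) ->
  #|Y : 'C_Y(H)| ^ #|H| <= (\prod_(x in H) #|Y : 'C_Y[x]|) ^ (4 * m ^ 2).
Proof.
move: (leqnn #|Y|); move: {2}#|Y| => n.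
elim: n gT Y H => [|n IHn] gT Y H le_Yn nilY nYH coYH le_m.
  by rewrite leqNgt cardG_gt0 in le_Yn.
have [trivY | ntY] := eqVneq (Y : {set gT}) 1.
  have -> : 'C_Y(H) = Y by apply/setIidPl; rewrite trivY sub1G.
  by rewrite indexgg exp1n expn_gt0 prodn_gt0 // => x; apply: indexg_gt0.
have [F [minF sFY cYF abF]] := minnormal_central_exists nilY ntY nYH.
have nFY : Y \subset 'N(F) by rewrite cents_norm // centsC.
have nFH := minnormal_norm minF.
have coFH : coprime #|F| #|H| := coprimeSg sFY coYH.
have solF : solvable F := abelian_sol (abelem_abelian abF).
have split_x x : x \in H ->
    #|Y : 'C_Y[x]| = (#|F : 'C_F[x]| * #|Y / F : 'C_(Y / F)[coset F x]|)%N.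
  move=> Hx; have nYx : <[x]> \subset 'N(Y) by rewrite cycle_subG (subsetP nYH).
  have nFx : <[x]> \subset 'N(F) by rewrite cycle_subG (subsetP nFH).
  have coFx : coprime #|F| #|<[x]>| by rewrite (coprimegS _ coFH) ?cycle_subG.
  have := index_cent_quotient sFY nFY nYx nFx coFx solF.
  by rewrite quotient_cycle ?(subsetP nFH) // !cent_cycle.
have le_mF x : x \in H -> #|F : 'C_F[x]| <= m.
  by move=> Hx; rewrite (leq_trans _ (le_m x Hx)) // split_x // leq_pmulr.
have le_mYF xb : xb \in H / F -> #|Y / F : 'C_(Y / F)[xb]| <= m.
  case/morphimP=> x _ Hx ->; rewrite (leq_trans _ (le_m x Hx)) // split_x //.
  by rewrite leq_pmull.
have ntF : F :!=: 1 by have [/andP[]] := mingroupP minF.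
have le_YFn : #|Y / F| <= n by rewrite -ltnS (leq_trans (ltn_quotient ntF sFY)).
have := IHn _ (Y / F)%G (H / F)%G le_YFn (quotient_nil F nilY)
  (morphim_norms _ nYH) (coprime_morph _ coYH) le_mYF.
have /isomP[injHF imHF] := quotient_isom nFH (coprime_TIg coFH).
have eHF : H / F = restrm nFH (coset F) @: H by rewrite -imHF morphimEdom.
have cardHF : #|H / F| = #|H| by rewrite eHF (card_in_imset (injmP injHF)).
rewrite /= cardHF eHF big_imset /=; last exact: injmP injHF.
rewrite -eHF => le_YF.
rewrite (index_cent_quotient sFY nFY nYH nFH coFH solF) expnMn.
rewrite (eq_bigr _ split_x) big_split expnMn.
exact: leq_mul (minnormal_index_bound cYF minF abF le_mF) le_YF.
Qed.

Lemma index_cent_bound (m : nat) (gT : finGroupType) (Y H : {group gT}) :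
  nilpotent Y -> H \subset 'N(Y) -> coprime #|Y| #|H| ->
  (forall x, x \in H -> #|Y : 'C_Y[x]| <= m) ->
  #|Y : 'C_Y(H)| <= m ^ (4 * m ^ 2).
Proof.
move=> nilY nYH coYH le_m.
have m_gt0 : 0 < m := leq_trans (indexg_gt0 Y _) (le_m 1 (group1 H)).
have le_prod : \prod_(x in H) #|Y : 'C_Y[x]| <= m ^ #|H|.
  by rewrite -prod_nat_const; apply: leq_prod => x /le_m.
rewrite -(leq_exp2r _ _ (cardG_gt0 H)) -expnM (mulnC _ #|H|) expnM.
apply: leq_trans (index_cent_prod_bound nilY nYH coYH le_m) _.
by rewrite leq_exp2r ?muln_gt0 ?expn_gt0 ?m_gt0.
Qed.

Theorem lemma2p6 :
  exists f : nat -> nat,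
    forall (m : nat) (gT : finGroupType) (G Q H : {group gT}),
      0 < m ->
      Q <| G -> H \subset G -> Q * H = G ->
      nilpotent Q ->
      coprime #|Q| #|H| ->
      (forall x, x \in H -> #|Q : 'C_Q[x]| <= m) ->
      #|[~: Q, H]| <= f m.
Proof.
exists (fun m => schur_bound (m ^ (4 * m ^ 2))).
move=> m gT G Q H _ nsQG sHG _ nilQ coQH le_m.
have nQH : H \subset 'N(Q) := subset_trans sHG (normal_norm nsQG).
set Y := [~: Q, H].
have sYQ : Y \subset Q by rewrite commg_subl.
have nYH : H \subset 'N(Y) := commg_normr H Q.
have coYH : coprime #|Y| #|H| := coprimeSg sYQ coQH.
have eY : [~: Y, H] = Y := coprime_commGid (nilpotent_sol nilQ) nQH coQH.
have le_mY x : x \in H -> #|Y : 'C_Y[x]| <= m.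
  by move=> Hx; rewrite /= !indexgI (leq_trans (indexg_leS _ sYQ)) // -indexgI le_m.
have le_idx := index_cent_bound (nilpotentS sYQ nilQ) nYH coYH le_mY.
exact: card_comm_eq_coprime (solvableS sYQ (nilpotent_sol nilQ)) nYH coYH eY le_idx.
Qed.
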